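(* Let $H:\mathbb{R}^2\to\mathbb{R}$ satisfy (C3), (CNH) and (CVX). Then: (UC) for every $h\in\mathbb{R}$ there exists $\mathcal{U}_h\in\mathbb{R}$ such that for all $(x,u)\in\mathbb{R}^2$, if $|H(x,u)|\le h$ then $|u|\le\mathcal{U}_h$; and (WGNL) for a.e. $x\in\mathbb{R}$ the set $\{w\in\mathbb{R}:\partial^2_{ww}H(x,w)=0\}$ has empty interior.
   Context: (C3) $H\in C^3(\mathbb{R}^2;\mathbb{R})$; (CNH) there exists $X>0$ such that $\partial_xH(x,p)=0$ for all $p$ whenever $|x|\ge X$; (CVX) for every $x\in\mathbb{R}$, $p\mapsto\partial_pH(x,p)$ is an increasing $C^1$-diffeomorphism of $\mathbb{R}$ onto itself. *)

From HB Require Import structures.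
From mathcomp Require Import all_boot all_order all_algebra.
From mathcomp Require Import all_classical all_reals all_analysis.
Set Implicit Arguments. Unset Strict Implicit. Unset Printing Implicit Defensive.
Import Order.TTheory GRing.Theory Num.Theory.
Import numFieldNormedType.Exports.
Local Open Scope classical_set_scope.
Local Open Scope ring_scope.

Section Defs.
Variable R : realType.

Definition dx (f : R -> R -> R) : R -> R -> R :=
  fun x p => derive1 (fun y => f y p) x.
Definition dp (f : R -> R -> R) : R -> R -> R :=
  fun x p => derive1 (fun q => f x q) p.

Definition has_partials (f : R -> R -> R) : Prop :=
  (forall x p, derivable (fun y => f y p) x 1) /\
  (forall x p, derivable (fun q => f x q) p 1).

Fixpoint Ck (k : nat) (f : R -> R -> R) : Prop :=
  continuous (fun z : R * R => f z.1 z.2) /\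
  match k with
  | 0%N => True
  | k'.+1 => has_partials f /\ Ck k' (dx f) /\ Ck k' (dp f)
  end.

Definition C1 (g : R -> R) : Prop :=
  (forall x, derivable g x 1) /\ continuous (derive1 g).

Definition incr_C1_diffeo (g : R -> R) : Prop :=
  {mono g : a b / a < b} /\ C1 g /\
  exists ginv : R -> R, cancel g ginv /\ cancel ginv g /\ C1 ginv.

Definition C3 (H : R -> R -> R) : Prop := Ck 3 H.
Definition CNH (H : R -> R -> R) : Prop :=
  exists X : R, 0 < X /\ forall x p, X <= `|x| -> dx H x p = 0.
Definition CVX (H : R -> R -> R) : Prop :=
  forall x, incr_C1_diffeo (fun p => dp H x p).

Definition UC (H : R -> R -> R) : Prop :=
  forall h : R, exists U : R, forall x u, `|H x u| <= h -> `|u| <= U.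
Definition WGNL (H : R -> R -> R) : Prop :=
  {ae (@lebesgue_measure R), forall x : R,
     (interior [set w : R | dp (dp H) x w = 0]) = set0}.
End Defs.

From mathcomp Require Import all_boot all_order all_algebra.
From mathcomp Require Import all_classical all_reals all_analysis.
From mathcomp Require Import lra.
Import Order.TTheory GRing.Theory Num.Theory.
Import numFieldNormedType.Exports.
Local Open Scope classical_set_scope.
Local Open Scope ring_scope.

(* WGNL holds at every x: dp H x is strictly increasing, so by the mean value
   theorem its derivative cannot vanish on a whole interval.  For UC, CNH lets
   us replace x by a point of the segment [-X, X].  Since each dp H x is
   increasing and onto, compactness of the segment yields A >= 0 with
   dp H x >= 1 on [A, +oo) and dp H x <= -1 on (-oo, -A] uniformly in x there;
   the mean value theorem then bounds |u| - A by H x u minus the minimum of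
   H(., A) and H(., -A) over [-X, X]. *)

Section RealFunctions.
Context {R : realType}.
Implicit Types (f : R -> R) (a b k : R).

Lemma MVT_derivable [f a b] : (forall x, derivable f x 1) -> a <= b ->
  exists2 c, a <= c <= b & f b - f a = derive1 f c * (b - a).
Proof.
move=> fd ab.
have df x : x \in `]a, b[ -> is_derive x 1 f (derive1 f x).
  by move=> _; rewrite derive1E; exact/derivableP.
have fc : {within `[a, b], continuous f}.
  by apply: continuous_subspaceT => x; exact/differentiable_continuous/derivable1_diffP.
have [c cab ->] := MVT_segment ab df fc.
by rewrite in_itv /= in cab; exists c.
Qed.

Lemma derive1_lbound_segment [f a b] k : (forall x, derivable f x 1) -> a <= b ->
  (forall c, a <= c <= b -> k <= derive1 f c) -> f a + k * (b - a) <= f b.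
Proof.
move=> fd ab kf; have [c cab e] := MVT_derivable fd ab.
by rewrite -lerBrDl e ler_wpM2r ?subr_ge0 ?kf.
Qed.

Lemma derive1_ubound_segment [f a b] k : (forall x, derivable f x 1) -> a <= b ->
  (forall c, a <= c <= b -> derive1 f c <= k) -> f b <= f a + k * (b - a).
Proof.
move=> fd ab fk; have [c cab e] := MVT_derivable fd ab.
by rewrite -lerBlDl e ler_wpM2r ?subr_ge0 ?fk.
Qed.

Lemma derive1_eq0_segment [f a b] : (forall x, derivable f x 1) -> a <= b ->
  (forall c, a <= c <= b -> derive1 f c = 0) -> f a = f b.
Proof.
move=> fd ab f0; apply/eqP; rewrite eq_le.
have f0l c : a <= c <= b -> 0 <= derive1 f c by move/f0->.
have f0u c : a <= c <= b -> derive1 f c <= 0 by move/f0->.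
have := derive1_lbound_segment 0 fd ab f0l; have := derive1_ubound_segment 0 fd ab f0u.
by rewrite !mul0r !addr0 => -> ->.
Qed.

Lemma eq_at_clamp f (X : R) : 0 < X -> (forall x, derivable f x 1) ->
  (forall x, X <= `|x| -> derive1 f x = 0) ->
  forall x, f x = f (Num.max (- X) (Num.min x X)).
Proof.
move=> X0 fd f0 x; have [Xx|xX] := lerP X x.
  rewrite max_r; last lra.
  apply/esym; apply: (derive1_eq0_segment fd Xx) => c /andP[Xc _].
  by apply: f0; rewrite ger0_norm //; lra.
have [xNX|NXx] := lerP x (- X).
  apply: (derive1_eq0_segment fd xNX) => c /andP[_ cX].
  by apply: f0; rewrite ler0_norm; lra.
by [].
Qed.

Lemma interior_derive1_eq0 f : {homo f : a b / a < b} ->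
  (forall x, derivable f x 1) -> interior [set w | derive1 f w = 0] = set0.
Proof.
move=> fincr fd; apply/seteqP; split=> [w /nbhs_ballP[e /= e0 we]|//].
have ww' : w <= w + e / 2 by rewrite lerDl divr_ge0 // ltW.
have [c /andP[wc cw'] fww'] := MVT_derivable fd ww'.
have fc0 : derive1 f c = 0.
  by apply: we; rewrite -ball_normE /ball_ /= distrC ger0_norm ?subr_ge0 //; lra.
move: (fincr w (w + e / 2)); rewrite ltrDl divr_gt0 // => /(_ isT).
by rewrite -subr_gt0 fww' fc0 mul0r ltxx.
Qed.

Lemma norm_le_coercive [f] [A m : R] : 0 <= A -> (forall u, derivable f u 1) ->
  (forall q, A <= q -> 1 <= derive1 f q) -> (forall q, q <= - A -> derive1 f q <= -1) ->
  m <= f A -> m <= f (- A) -> forall u, `|u| <= A + `|f u - m|.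
Proof.
move=> A0 fd fge fle mA mNA u; have := ler_norm (f u - m).
have [Au|uA] := lerP A u.
  have : f A + 1 * (u - A) <= f u.
    by apply: (derive1_lbound_segment 1 fd Au) => c /andP[Ac _]; exact: fge.
  by rewrite [`|u|]ger0_norm; lra.
have [uNA|NAu] := lerP u (- A).
  have : f (- A) <= f u + -1 * (- A - u).
    by apply: (derive1_ubound_segment (-1) fd uNA) => c /andP[_ cA]; exact: fle.
  by rewrite [`|u|]ler0_norm; lra.
have := normr_ge0 (f u - m); have : `|u| <= A by rewrite ler_norml; lra.
lra.
Qed.

Lemma continuous_section [g : R * R -> R] a :
  continuous g -> continuous (fun x => g (x, a)).
Proof. by move=> gc x; apply: continuous_comp (gc _); exact: cvg_pair cvg_id (cvg_cst a). Qed.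

Lemma segment_uniform_gt (g : R -> R -> R) a b c :
  (forall p, continuous (fun x => g x p)) -> (forall x, {homo g x : p q / p <= q}) ->
  (forall x, exists p, c < g x p) ->
  exists P, forall x q, a <= x <= b -> P <= q -> c < g x q.
Proof.
move=> gc gincr gunb.
pose F n := [set x | c < g x n%:R].
have : finite_subset_cover setT F `[a, b].
  have := @segment_compact R a b; rewrite compact_cover; apply.
    move=> n _; apply: (@open_comp _ _ (fun x => g x n%:R) [set y | c < y]).
      by move=> y _; apply: gc.
    exact: open_gt.
  move=> x _; have [p cp] := gunb x.
  exists (Num.bound `|p|) => //; apply: (lt_le_trans cp); apply: gincr.
  exact/ltW/(le_lt_trans (ler_norm p))/archi_boundP.
move=> [D _ cover]; exists (\max_(i <- finmap.enum_fset D) i)%N%:R => x q xab Pq.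
have [n nD cn] := cover x (xab : x \in `[a, b]).
apply: (lt_le_trans cn); apply: gincr; apply: le_trans Pq.
by rewrite ler_nat; apply: (@leq_bigmax_seq _ _ xpredT id).
Qed.
End RealFunctions.

Section Hamiltonian.
Context {R : realType} {H : R -> R -> R}.
Implicit Types a b : R.
Hypotheses (HC3 : C3 H) (HCVX : CVX H).

Lemma CVX_WGNL : WGNL H.
Proof.
apply: aeW => x; have [dpH_mono [[dpH_derivable _] _]] := HCVX x.
exact: interior_derive1_eq0 (mono2W dpH_mono) dpH_derivable.
Qed.

Lemma dpH_homo x : {homo dp H x : p q / p <= q}.
Proof. exact: ltW_homo (mono2W (HCVX x).1). Qed.

Lemma dpH_surj x y : exists p, dp H x p = y.
Proof. by have [_ [_ [ginv [_ [ginvK _]]]]] := HCVX x; exists (ginv y); rewrite ginvK. Qed.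

Lemma dpH_uniform_bound a b : exists A : R, 0 <= A /\ forall x : R, a <= x <= b ->
  (forall q, A <= q -> 1 <= dp H x q) /\ (forall q, q <= - A -> dp H x q <= -1).
Proof.
have [_ [_ [_ [dpHc _]]]] := HC3.
have dpHc_x p : continuous (fun x => dp H x p) := continuous_section p dpHc.
have [P1 hP1] : exists P1, forall x q, a <= x <= b -> P1 <= q -> 1 < dp H x q.
  apply: segment_uniform_gt dpHc_x dpH_homo _ => x.
  by have [p dp2] := dpH_surj x 2; exists p; rewrite dp2 ltr1n.
have [P2 hP2] : exists P2, forall x q, a <= x <= b -> P2 <= q -> 1 < - dp H x (- q).
  apply: segment_uniform_gt => [p|x p q pq|x].
  - by move=> x; exact: continuousN (dpHc_x (- p) x).
  - by rewrite lerN2; apply: dpH_homo; rewrite lerN2.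
  - by have [p dpN2] := dpH_surj x (-2); exists (- p); rewrite opprK dpN2 opprK ltr1n.
exists (Num.max 0 (Num.max P1 P2)); split=> [|x xab]; first by rewrite le_max lexx.
split=> q.
  by rewrite !ge_max => /and3P[_ P1q _]; exact/ltW/hP1.
rewrite lerNr !ge_max => /and3P[_ _ P2q].
by have := hP2 x (- q) xab P2q; rewrite opprK lerNr => /ltW.
Qed.

Lemma UC_segment [a b] : a <= b -> forall h : R, exists U : R,
  forall x u : R, a <= x <= b -> `|H x u| <= h -> `|u| <= U.
Proof.
move=> ab h; have [A [A0 hA]] := dpH_uniform_bound a b.
have [Hc [[_ Hdp] _]] := HC3.
have Hc_x p : continuous (fun x => H x p) := continuous_section p Hc.
have [c1 _ minA] := EVT_min ab (continuous_subspaceT (Hc_x A)).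
have [c2 _ minNA] := EVT_min ab (continuous_subspaceT (Hc_x (- A))).
pose m := Num.min (H c1 A) (H c2 (- A)).
exists (A + h + `|m|) => x u xab Hxu.
have xab' : x \in `[a, b] by rewrite in_itv.
have mA : m <= H x A by rewrite ge_min minA.
have mNA : m <= H x (- A) by rewrite ge_min minNA ?orbT.
have [dpH_ge dpH_le] := hA x xab.
apply: (le_trans (norm_le_coercive A0 (Hdp x) dpH_ge dpH_le mA mNA u)).
by rewrite -addrA lerD2l (le_trans (ler_normB _ _)) // lerD2r.
Qed.

Lemma CNH_reduction : CNH H ->
  exists X : R, 0 < X /\ forall x, exists2 x' : R, - X <= x' <= X & forall u, H x u = H x' u.
Proof.
move=> [X [X0 dxH0]]; exists X; split=> // x.
have [_ [[Hdx _] _]] := HC3.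
have NXX : - X <= X by lra.
exists (Num.max (- X) (Num.min x X)).
  by rewrite le_max ge_max ge_min !lexx NXX !orbT.
by move=> u; exact: eq_at_clamp X0 (Hdx ^~ u) (dxH0 ^~ u) x.
Qed.
End Hamiltonian.

Theorem proposition2p4 (R : realType) (H : R -> R -> R) :
  C3 H -> CNH H -> CVX H -> UC H /\ WGNL H.
Proof.
move=> HC3 HCNH HCVX; split; last exact: CVX_WGNL.
have [X [X0 H_clamp]] := CNH_reduction HC3 HCNH.
have NXX : - X <= X by lra.
move=> h; have [U HU] := UC_segment HC3 HCVX NXX h.
by exists U => x u; have [x' x'X ->] := H_clamp x; exact: HU.
Qed.
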